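(* If $P$ is a quadrilateral (a $4$-sided polygon) with vertices $v_1,v_2,v_3,v_4\in\mathbb{C}$ in counterclockwise order that satisfies the closed cap condition, then $P$ is a parallelogram; more precisely $v_2 - v_1 = v_3 - v_4$.
   Context: Identify $\mathbb{R}^2$ with $\mathbb{C}$. An $n$-sided polygon is a closed region of the plane enclosed by a simple cycle of $n$ straight line segments; its vertices are the endpoints of these segments. For a polygon with vertices $v_1,\dots,v_n$ in counterclockwise order, set $v_{n+1}=v_1$, let $s_k = v_{k+1}-v_k$ be its $k$-th edge, and let $\theta_k\in(0,2\pi)$ be the internal angle at $v_k$. Cap construction (polygonal cap curve): set $\kappa = 4\pi/n$. For each $k$ let $\alpha_k = \pi - \theta_k$ (the counterclockwise turning angle of $P$ at $v_k$, so that $\arg s_k = \arg s_{k-1} + \alpha_k$), $\hat\theta_k = 2\pi - \theta_k - \kappa$, and $\beta_k = \pi - \hat\theta_k$ (so $\alpha_k+\beta_k = \kappa$). Put $\hat v_1 = v_1$, $\hat v_2 = v_2$, and for $k=2,\dots,n$ define $\hat v_{k+1} = \hat v_k + \hat s_k$, where $\hat s_k$ is the complex number with $|\hat s_k| = |s_k|$ whose direction is obtained by turning the direction of $\hat s_{k-1} = \hat v_k - \hat v_{k-1}$ clockwise by the angle $\beta_k$, i.e. $\hat s_k/|\hat s_k| = e^{-i\beta_k}\,\hat s_{k-1}/|\hat s_{k-1}|$. The points $\hat v_1,\dots,\hat v_{n+1}$ are the vertices of the polygonal cap curve of $P$. Closed cap condition: $P$ satisfies the closed cap condition if $\hat v_{n+1}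 = \hat v_1$. *)

From Stdlib Require Import Reals List Arith.
From Coquelicot Require Import Coquelicot.
Open Scope R_scope.

(* Principal argument of a complex number, with values in [0, 2*PI)
   (atan2-style definition; arg02 0 = 0 by convention). *)
Definition arg02 (z : C) : R :=
  let x := fst z in let y := snd z in
  let a :=
    if Rlt_dec 0 x then atan (y / x)
    else if Rlt_dec x 0 then
      (if Rle_dec 0 y then atan (y / x) + PI else atan (y / x) - PI)
    else if Rlt_dec 0 y then PI / 2
    else if Rlt_dec y 0 then - (PI / 2)
    else 0 in
  if Rlt_dec a 0 then a + 2 * PI else a.

Definition cexp (t : R) : C := (cos t, sin t).

(* A polygon with n vertices is given by w : nat -> C, where w 0, ..., w (n-1)
   are the vertices v_1, ..., v_n of the paper (0-indexed storage). *)

Definition seg (a b z : C) : Prop :=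
  exists t : R, 0 <= t <= 1 /\ z = (a + RtoC t * (b - a))%C.

Definition on_edge (n : nat) (w : nat -> C) (i : nat) (z : C) : Prop :=
  seg (w i) (w ((S i) mod n)) z.

Definition simple_polygon (n : nat) (w : nat -> C) : Prop :=
  (3 <= n)%nat /\
  (forall i j, (i < n)%nat -> (j < n)%nat -> i <> j -> w i <> w j) /\
  (forall i j z, (i < n)%nat -> (j < n)%nat -> i <> j ->
     on_edge n w i z -> on_edge n w j z ->
     (j = (S i) mod n /\ z = w j) \/ (i = (S j) mod n /\ z = w i)).

Definition signed_area (n : nat) (w : nat -> C) : R :=
  fold_right Rplus 0
    (map (fun i => (fst (w i) * snd (w ((S i) mod n))
                    - fst (w ((S i) mod n)) * snd (w i)) / 2) (seq 0 n)).

Definition counterclockwise (n : nat) (w : nat -> C) : Prop :=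
  0 < signed_area n w.

(* Paper (1-based, cyclic) indexing: V k = v_k, with V 0 = v_n, V (n+1) = v_1. *)
Definition V (n : nat) (w : nat -> C) (k : nat) : C := w ((k + n - 1) mod n).

Definition sedge (n : nat) (w : nat -> C) (k : nat) : C :=
  (V n w (S k) - V n w k)%C.

(* Internal angle theta_k in (0, 2*PI) at v_k of a counterclockwise polygon:
   the counterclockwise angle from the outgoing edge direction v_{k+1} - v_k
   to the reversed incoming edge direction v_{k-1} - v_k (interior on the left). *)
Definition theta (n : nat) (w : nat -> C) (k : nat) : R :=
  arg02 ((V n w (k - 1) - V n w k) / (V n w (S k) - V n w k))%C.

Definition kappa (n : nat) : R := 4 * PI / INR n.
Definition alpha (n : nat) (w : nat -> C) (k : nat) : R := PI - theta n w k.
Definition theta_hat (n : nat) (w : nat -> C) (k : nat) : R :=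
  2 * PI - theta n w k - kappa n.
Definition beta (n : nat) (w : nat -> C) (k : nat) : R := PI - theta_hat n w k.

Fixpoint cap_edge (n : nat) (w : nat -> C) (k : nat) : C :=
  match k with
  | O => 0%C
  | S O => sedge n w 1
  | S k' => (RtoC (Cmod (sedge n w k)) * cexp (- beta n w k)
             * (cap_edge n w k' / RtoC (Cmod (cap_edge n w k'))))%C
  end.

Fixpoint cap_vertex (n : nat) (w : nat -> C) (k : nat) : C :=
  match k with
  | O => V n w 1
  | S O => V n w 1
  | S k' => (cap_vertex n w k' + cap_edge n w k')%C
  end.

Definition closed_cap (n : nat) (w : nat -> C) : Prop :=
  cap_vertex n w (S n) = cap_vertex n w 1.

Definition quad (v1 v2 v3 v4 : C) : nat -> C :=
  fun i => match i with 0 => v1 | 1 => v2 | 2 => v3 | _ => v4 end.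

(* For a quadrilateral kappa = 4 PI / 4 = PI, so beta_k = theta_k: the cap curve turns
   clockwise by the full internal angle at each vertex.  Turning the edge direction
   -s_(k-1) clockwise by theta_k gives the direction of s_k, so a cap edge equal to
   +-s_(k-1) is followed by the cap edge -+s_k, i.e. cap edge k is (-1)^(k+1) s_k.
   Closing the cap means s_1 - s_2 + s_3 - s_4 = 0; together with
   s_1 + s_2 + s_3 + s_4 = 0 this gives s_1 = -s_3, that is v_2 - v_1 = v_3 - v_4. *)
From Stdlib Require Import Reals Lra Lia.
From Coquelicot Require Import Coquelicot.
Open Scope R_scope.

Lemma sqrt_sum_sq_factor (x y : R) :
  x <> 0 -> sqrt (x * x + y * y) = Rabs x * sqrt (1 + (y / x)²).
Proof.
  intros Hx.
  replace (x * x + y * y) with (x² * (1 + (y / x)²)) by (unfold Rsqr; field; auto).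
  rewrite sqrt_mult, sqrt_Rsqr_abs; auto using Rle_0_sqr.
  pose proof (Rle_0_sqr (y / x)); lra.
Qed.

Lemma arg02_polar (x y : R) : (x, y) <> (0, 0) ->
  cos (arg02 (x, y)) * Cmod (x, y) = x /\ sin (arg02 (x, y)) * Cmod (x, y) = y.
Proof.
  intros Hz.
  assert (Hshift : forall a, cos a * Cmod (x, y) = x /\ sin a * Cmod (x, y) = y ->
     cos (if Rlt_dec a 0 then a + 2 * PI else a) * Cmod (x, y) = x /\
     sin (if Rlt_dec a 0 then a + 2 * PI else a) * Cmod (x, y) = y).
  { intros a [Hc Hs]. destruct (Rlt_dec a 0); [|auto].
    rewrite cos_plus, sin_plus, cos_2PI, sin_2PI. split; nra. }
  unfold arg02; simpl fst; simpl snd. apply Hshift.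
  unfold Cmod; simpl fst; simpl snd.
  replace (x ^ 2 + y ^ 2) with (x * x + y * y) by ring.
  assert (Hpos : x <> 0 -> 0 < sqrt (1 + (y / x)²)).
  { intros. apply sqrt_lt_R0. pose proof (Rle_0_sqr (y / x)); lra. }
  destruct (Rlt_dec 0 x) as [Hx|Hx].
  { rewrite sqrt_sum_sq_factor, cos_atan, sin_atan, Rabs_right by lra.
    specialize (Hpos ltac:(lra)). split; field; lra. }
  destruct (Rlt_dec x 0) as [Hx'|Hx'].
  { rewrite sqrt_sum_sq_factor, Rabs_left by lra. specialize (Hpos ltac:(lra)).
    destruct (Rle_dec 0 y).
    - rewrite cos_plus, sin_plus, cos_PI, sin_PI, cos_atan, sin_atan. split; field; lra.
    - rewrite cos_minus, sin_minus, cos_PI, sin_PI, cos_atan, sin_atan. split; field; lra. }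
  assert (x = 0) by lra. subst x.
  replace (0 * 0 + y * y) with (y * y) by ring.
  destruct (Rlt_dec 0 y).
  { rewrite sqrt_square, cos_PI2, sin_PI2 by lra. split; ring. }
  destruct (Rlt_dec y 0).
  { replace (y * y) with (- y * - y) by ring.
    rewrite sqrt_square, cos_neg, sin_neg, cos_PI2, sin_PI2 by lra. split; ring. }
  exfalso. apply Hz. f_equal; lra.
Qed.

Lemma cexp_arg02_Cmod (z : C) : z <> 0%C -> (cexp (arg02 z) * Cmod z)%C = z.
Proof.
  destruct z as [x y]. intros Hz.
  destruct (arg02_polar x y Hz) as [Hc Hs].
  unfold cexp, Cmult, RtoC; simpl. f_equal; rewrite Rmult_0_r; lra.
Qed.

Lemma cexp_opp_mul (t : R) : (cexp (- t) * cexp t)%C = 1%C.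
Proof.
  unfold cexp, Cmult; simpl. rewrite cos_neg, sin_neg.
  pose proof (sin2_cos2 t) as H. unfold Rsqr in H. unfold RtoC; f_equal; [lra | ring].
Qed.

Lemma RtoC_Cmod_neq0 (z : C) : z <> 0%C -> RtoC (Cmod z) <> 0%C.
Proof.
  intros Hz E. apply Hz, Cmod_eq_0. unfold RtoC in E. now injection E.
Qed.

(* Rotating the unit vector c/|c| by -arg(a/b) and rescaling to length |b| is
   multiplication by b/a, because |c| = |a|. *)
Lemma clockwise_turn (a b c : C) : a <> 0%C -> b <> 0%C -> Cmod c = Cmod a ->
  (RtoC (Cmod b) * cexp (- arg02 (a / b)) * (c / RtoC (Cmod c)))%C = (b * c / a)%C.
Proof.
  intros Ha Hb Hc. rewrite Hc.
  assert (Hab : (a / b)%C <> 0%C).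
  { intros E. apply Ha. replace a with (a / b * b)%C by (field; auto). rewrite E. ring. }
  pose proof (cexp_arg02_Cmod _ Hab) as Hpolar.
  pose proof (cexp_opp_mul (arg02 (a / b))) as Hinv.
  rewrite Cmod_div in Hpolar by auto.
  set (e := cexp (arg02 (a / b))) in *. set (e' := cexp (- arg02 (a / b))) in *.
  pose proof (RtoC_Cmod_neq0 _ Ha). pose proof (RtoC_Cmod_neq0 _ Hb).
  assert (He' : e' = (e' * (e * RtoC (Cmod a / Cmod b)) * (b / a))%C).
  { rewrite Hpolar. field. auto. }
  rewrite Cmult_assoc, Hinv in He'.
  rewrite He', RtoC_div. field. repeat split; auto.
  intros E. apply (RtoC_Cmod_neq0 _ Hb). now rewrite E.
Qed.

Lemma mod_neq_mod_succ (a b : nat) : (2 <= b)%nat -> a mod b <> (S a) mod b.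
Proof.
  intros Hb.
  pose proof (Nat.div_mod_eq a b). pose proof (Nat.mod_upper_bound a b ltac:(lia)).
  set (q := (a / b)%nat) in *; set (r := (a mod b)%nat) in *.
  destruct (Nat.lt_ge_cases (S r) b).
  - rewrite <- (Nat.mod_unique (S a) b q (S r)); lia.
  - rewrite <- (Nat.mod_unique (S a) b (S q) 0); lia.
Qed.

Lemma sedge_neq0 (n : nat) (w : nat -> C) (k : nat) :
  simple_polygon n w -> sedge n w k <> 0%C.
Proof.
  intros [Hn [Hdistinct _]]. unfold sedge, V.
  apply Cminus_eq_contra, Hdistinct; try (apply Nat.mod_upper_bound; lia).
  replace (S k + n - 1)%nat with (S (k + n - 1)) by lia.
  apply not_eq_sym, mod_neq_mod_succ. lia.
Qed.

Lemma beta_quad (w : nat -> C) (k : nat) : beta 4 w k = theta 4 w k.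
Proof.
  unfold beta, theta_hat, kappa. replace (INR 4) with 4 by (simpl; ring). field.
Qed.

Lemma cap_edge_quad_succ (w : nat -> C) (k : nat) : (1 <= k)%nat ->
  sedge 4 w k <> 0%C -> sedge 4 w (S k) <> 0%C ->
  Cmod (cap_edge 4 w k) = Cmod (sedge 4 w k) ->
  cap_edge 4 w (S k) = (- sedge 4 w (S k) * cap_edge 4 w k / sedge 4 w k)%C.
Proof.
  intros Hk Hs Hs' Hmod.
  destruct k as [|k]; [lia|].
  change (cap_edge 4 w (S (S k))) with
    (RtoC (Cmod (sedge 4 w (S (S k)))) * cexp (- beta 4 w (S (S k)))
     * (cap_edge 4 w (S k) / RtoC (Cmod (cap_edge 4 w (S k)))))%C.
  assert (Htheta : theta 4 w (S (S k))
                   = arg02 (- sedge 4 w (S k) / sedge 4 w (S (S k)))%C).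
  { unfold theta, sedge. replace (S (S k) - 1)%nat with (S k) by lia.
    f_equal. field. exact Hs'. }
  rewrite beta_quad, Htheta, clockwise_turn.
  - field. auto.
  - intros E. apply Hs.
    replace (sedge 4 w (S k)) with (- - sedge 4 w (S k))%C by ring. rewrite E. ring.
  - exact Hs'.
  - now rewrite Cmod_opp.
Qed.

Lemma cap_edge_quad_alternating (w : nat -> C) (k : nat) :
  simple_polygon 4 w -> (1 <= k)%nat ->
  cap_edge 4 w k = (RtoC ((-1) ^ S k) * sedge 4 w k)%C.
Proof.
  intros Hsimple Hk. induction k as [|k IH]; [lia|].
  destruct (Nat.eq_dec k 0) as [->|Hk0].
  - change (cap_edge 4 w 1) with (sedge 4 w 1).
    replace ((-1) ^ 2) with 1 by ring. ring.
  - rewrite cap_edge_quad_succ, IH; auto using sedge_neq0; try lia.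
    + change ((-1) ^ S (S k)) with (-1 * (-1) ^ S k).
      rewrite RtoC_mult. field. auto using sedge_neq0.
    + rewrite IH by lia. rewrite Cmod_mult, Cmod_R, pow_1_abs. ring.
Qed.

Theorem proposition2p2 (v1 v2 v3 v4 : C) :
  simple_polygon 4 (quad v1 v2 v3 v4) ->
  counterclockwise 4 (quad v1 v2 v3 v4) ->
  closed_cap 4 (quad v1 v2 v3 v4) ->
  (v2 - v1)%C = (v3 - v4)%C.
Proof.
  intros Hsimple _ Hclosed.
  set (w := quad v1 v2 v3 v4) in *.
  unfold closed_cap in Hclosed.
  change (cap_vertex 4 w 5) with (cap_vertex 4 w 1 + cap_edge 4 w 1 + cap_edge 4 w 2
     + cap_edge 4 w 3 + cap_edge 4 w 4)%C in Hclosed.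
  rewrite !cap_edge_quad_alternating in Hclosed by (auto; lia).
  change (cap_vertex 4 w 1) with v1 in Hclosed.
  unfold sedge, V in Hclosed; simpl in Hclosed.
  clear - Hclosed.
  destruct v1 as [a1 b1], v2 as [a2 b2], v3 as [a3 b3], v4 as [a4 b4].
  unfold Cminus, Cplus, Copp, Cmult, RtoC in *; simpl in *.
  injection Hclosed as Hre Him. f_equal; lra.
Qed.
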